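(* Let $G$ be a special linear or symplectic algebraic group over an algebraically closed field, with natural module $V$ of dimension $n$. Let $C_1,\dots,C_e$ be conjugacy classes of $G$, $\Omega=C_1\times\dots\times C_e$, and let $\gamma_j$ be the dimension of the largest eigenspace on $V$ of an element of $C_j$. Then $\sum_{j=1}^e\gamma_j\leq n(e-1)$ if and only if there is a tuple $(x_1,\dots,x_e)\in\Omega$ such that no $1$-dimensional subspace of $V$ is fixed by all of $x_1,\dots,x_e$. *)

From HB Require Import structures.
From mathcomp Require Import all_boot all_order all_algebra.
Set Implicit Arguments. Unset Strict Implicit. Unset Printing Implicit Defensive.
Import GRing.Theory.
Local Open Scope ring_scope.

Section Defs.
Variable (k : fieldType) (n : nat).

(* dimension of the lambda-eigenspace of x on V = k^n (column vectors),
   i.e. dim ker (x - lambda I) *)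
Definition eigdim (x : 'M[k]_n) (lam : k) : nat := subn n (\rank (x - lam%:M)%R).

Definition largest_eigdim (x : 'M[k]_n) (g : nat) : Prop :=
  (exists lam, eigdim x lam = g) /\ (forall lam, (eigdim x lam <= g)%N).

Definition SL_group : 'M[k]_n -> Prop := fun g => \det g = 1.

Definition symplectic_form (J : 'M[k]_n) : Prop :=
  J \in unitmx /\ forall v : 'cV[k]_n, v^T *m J *m v = 0.

Definition Sp_group (J : 'M[k]_n) : 'M[k]_n -> Prop :=
  fun g => g^T *m J *m g = J.

Definition SL_or_Sp (G : 'M[k]_n -> Prop) : Prop :=
  (forall g, G g <-> SL_group g) \/
  (exists J, symplectic_form J /\ forall g, G g <-> Sp_group J g).

Definition conj_in (G : 'M[k]_n -> Prop) (x y : 'M[k]_n) : Prop :=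
  exists g, G g /\ y = g *m x *m invmx g.

Definition fixes_line (x : 'M[k]_n) (v : 'cV[k]_n) : Prop :=
  exists lam : k, x *m v = lam *: v.

End Defs.

From HB Require Import structures.
From mathcomp Require Import all_boot all_order all_algebra.
From mathcomp Require Import zify.
Set Implicit Arguments. Unset Strict Implicit.
Import GRing.Theory.
Local Open Scope ring_scope.

(* A line fixed by conjugates [y_j] of the [x_j] is a nonzero vector in the
   intersection of one eigenspace of each [y_j]. Codimensions are subadditive
   under intersection, so if [sum_j (n - gam_j) < n] such a line always exists.
   Conversely, [SL] and [Sp] contain enough transvections to put any finite
   family of pairs of subspaces [(U, W g)] in general position: for a pair that
   is not transversal, a generic transvection through a vector of [U :&: W g]
   enlarges [U + W g] and shrinks no other sum. Choosing the conjugating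
   elements one at a time in general position with respect to all the
   eigenspace intersections found so far, the common eigenvectors of
   [y_1, ..., y_m] are covered by finitely many subspaces of codimension at
   least [sum_(j <= m) (n - gam_j)]; when this reaches [n], none is left. *)

Section Transvections.
Context {k : fieldType} {n : nat}.
Implicit Types (G : 'M[k]_n -> Prop) (J S : 'M[k]_n) (x : 'rV[k]_n).

Lemma det1_addmx_mul (u : 'cV[k]_n) (v : 'rV[k]_n) :
  v *m u = 0 -> \det (1%:M + u *m v) = 1.
Proof.
move=> vu0.
have E1 : block_mx (1%:M + u *m v) (- u) 0 (1%:M : 'M_1) *m block_mx 1%:M 0 v 1%:M
   = block_mx 1%:M (- u) v 1%:M.
  by rewrite mulmx_block ?mulmx1 ?mul1mx ?mulmx0 ?mul0mx ?addr0 ?add0r mulNmx addrK.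
have E2 : block_mx 1%:M 0 v (1%:M : 'M_1) *m block_mx 1%:M (- u) 0 1%:M
   = block_mx 1%:M (- u) v 1%:M.
  rewrite mulmx_block ?mulmx1 ?mul1mx ?mulmx0 ?mul0mx ?addr0 ?add0r.
  by rewrite mulmxN vu0 oppr0 ?add0r ?addr0.
have := congr1 determinant (etrans E1 (esym E2)).
by rewrite !det_mulmx !det_ublock !det_lblock !det1 !mulr1.
Qed.

Lemma trmx_alternating J : (forall v : 'cV[k]_n, v^T *m J *m v = 0) -> J^T = - J.
Proof.
move=> Jalt; apply/matrixP => i j; rewrite !mxE.
have form a b : (delta_mx a 0 : 'cV[k]_n)^T *m J *m delta_mx b 0 = (J a b)%:M.
  by rewrite [LHS]mx11_scalar trmx_delta -rowE -colE !mxE.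
have := Jalt (delta_mx i 0 + delta_mx j 0).
rewrite mulmxDr [(_ + _)^T]linearD /= !mulmxDl !form.
have := Jalt (delta_mx i 0); have := Jalt (delta_mx j 0).
rewrite !form => -> ->; rewrite add0r addr0 -raddfD /=.
move/(congr1 (fun M : 'M_1 => M 0 0)); rewrite !mxE eqxx mulr1n.
by move/eqP; rewrite addr_eq0 => /eqP.
Qed.

Lemma exists_rV_notsub2 m m1 m2 (A : 'M[k]_(m, n)) (B1 : 'M_(m1, n)) (B2 : 'M_(m2, n)) :
  ~~ (A <= B1)%MS -> ~~ (A <= B2)%MS ->
  exists2 v : 'rV_n, (v <= A)%MS & ~~ (v <= B1)%MS && ~~ (v <= B2)%MS.
Proof.
case/row_subPn => i nAiB1; case/row_subPn => j nAjB2.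
have [AiB2|] := boolP (row i A <= B2)%MS; last by exists (row i A); rewrite ?row_sub ?nAiB1.
have [AjB1|] := boolP (row j A <= B1)%MS; last by exists (row j A); rewrite ?row_sub ?nAjB2 ?andbT.
exists (row i A + row j A); first by rewrite addmx_sub ?row_sub.
apply/andP; split.
- by apply: contra nAiB1 => sB1; rewrite -(addrK (row j A) (row i A)) addmx_sub ?eqmx_opp.
- by apply: contra nAjB2 => sB2; rewrite -(addKr (row i A) (row j A)) addmx_sub ?eqmx_opp.
Qed.

(* The only property of [G] beyond being a monoid of invertible matrices that
   the general-position argument uses. *)
Definition transvection_rich G :=
  forall S x, x != 0 -> (x <= S)%MS -> (\rank S < n)%N ->
  exists p q : 'rV_n,
    [/\ x *m p^T != 0, ~~ (q <= S)%MS & forall t, G (1%:M + t *: (q^T *m p))].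

Lemma SL_transvection_rich : transvection_rich (@SL_group k n).
Proof.
move=> S x x0 xS rS.
have [i xi0] : exists i, x 0 i != 0.
  apply/existsP; apply: contraR x0 => /existsPn x_0.
  by apply/eqP/matrixP => a b; rewrite ord1 mxE; apply/eqP/negPn/x_0.
pose p : 'rV[k]_n := delta_mx 0 i.
have xp : x *m p^T = (x 0 i)%:M by rewrite [LHS]mx11_scalar trmx_delta -colE mxE.
have xp0 : x *m p^T != 0.
  by apply: contraNneq xi0 => /matrixP/(_ 0 0); rewrite xp !mxE eqxx mulr1n => ->.
have p0 : p != 0 by apply: contraNneq xp0 => ->; rewrite trmx0 mulmx0.
have rH : \rank (kermx p^T) = n.-1 by rewrite mxrank_ker mxrank_tr rank_rV p0 subn1.
have /row_subPn[j qS] : ~~ (kermx p^T <= S)%MS.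
  apply/negP => HS; have SH : (S <= kermx p^T)%MS.
    by rewrite -(geq_leqif (mxrank_leqif_sup HS)) rH; lia.
  by move/sub_kermxP: (submx_trans xS SH); apply/eqP.
have qp : row j (kermx p^T) *m p^T = 0 by apply/sub_kermxP; exact: row_sub.
exists p, (row j (kermx p^T)); split=> // t.
rewrite /SL_group scalemxAl det1_addmx_mul // -scalemxAr.
by rewrite -[p *m _]trmxK trmx_mul trmxK qp trmx0 scaler0.
Qed.

Lemma Sp_transvection_rich J : symplectic_form J -> transvection_rich (Sp_group J).
Proof.
case=> Ju Jalt S x x0 xS rS.
have nS : ~~ ((1%:M : 'M_n) <= S)%MS by apply/negP => /mxrankS; rewrite mxrank1; lia.
have nK : ~~ ((1%:M : 'M_n) <= kermx (J *m x^T))%MS.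
  apply/negP => /sub_kermxP; rewrite mul1mx => Jx0.
  by move: x0; rewrite -[x]trmxK -(mulKmx Ju x^T) Jx0 mulmx0 trmx0 eqxx.
have [q _ /andP[qS qK]] := exists_rV_notsub2 nS nK.
have qJq : q *m J *m q^T = 0 by have := Jalt q^T; rewrite trmxK.
exists (q *m J), q; split => // [|t].
  apply: contra qK => /eqP xJq; apply/sub_kermxP; apply: trmx_inj.
  by rewrite trmx0 !trmx_mul trmxK -mulmxA -trmx_mul xJq.
rewrite /Sp_group [(_ + _)^T]linearD /= trmx1 [(_ *: _)^T]linearZ /= !trmx_mul trmxK.
rewrite (trmx_alternating Jalt) !mulmxDl !mulmxDr !mul1mx !mulmx1 -!scalemxAl -!scalemxAr.
rewrite !scalerA !mulmxA !mulNmx.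
have -> : J *m q^T *m q *m J *m q^T *m q *m J = 0.
  by rewrite -!mulmxA (mulmxA q J) (mulmxA (q *m J)) qJq !mul0mx !mulmx0.
by rewrite oppr0 scaler0 addr0 scalerN addrK.
Qed.

End Transvections.

Section SLorSp.
Context {k : fieldType} {n : nat} (G : 'M[k]_n -> Prop).
Hypothesis HG : SL_or_Sp G.

Lemma SL_or_Sp1 : G 1%:M.
Proof.
case: HG => [eqG | [J [_ eqG]]]; apply/eqG; first by rewrite /SL_group det1.
by rewrite /Sp_group trmx1 mul1mx mulmx1.
Qed.

Lemma SL_or_SpM a b : G a -> G b -> G (a *m b).
Proof.
case: HG => [eqG | [J [_ eqG]]] /eqG Ga /eqG Gb; apply/eqG.
  by rewrite /SL_group det_mulmx Ga Gb mulr1.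
by rewrite /Sp_group trmx_mul !mulmxA -(mulmxA _ _ J) -(mulmxA _ _ a) Ga.
Qed.

Lemma SL_or_Sp_unitmx a : G a -> a \in unitmx.
Proof.
case: HG => [eqG | [J [[Ju _] eqG]]] /eqG Ga; first by rewrite unitmxE Ga unitr1.
have := congr1 determinant Ga; rewrite !det_mulmx det_tr => detGa.
rewrite unitmxE unitfE; apply/eqP => a0.
by move: Ju; rewrite unitmxE unitfE -detGa a0 !mul0r eqxx.
Qed.

Lemma SL_or_Sp_transvection_rich : transvection_rich G.
Proof.
move=> S x x0 xS rS.
case: HG => [eqG | [J [HJ eqG]]].
  have [p [q [xp qS SLt]]] := SL_transvection_rich x0 xS rS.
  by exists p, q; split => // t; apply/eqG.
have [p [q [xp qS Spt]]] := Sp_transvection_rich HJ x0 xS rS.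
by exists p, q; split => // t; apply/eqG.
Qed.

End SLorSp.

Section Generic.
Variable k : fieldType.

Definition generic (P : k -> Prop) :=
  exists2 D : {poly k}, D != 0 & forall t, ~~ root D t -> P t.

Lemma generic_and (P Q : k -> Prop) :
  generic P -> generic Q -> generic (fun t => P t /\ Q t).
Proof.
move=> [DP DP0 HP] [DQ DQ0 HQ]; exists (DP * DQ); first by rewrite mulf_neq0.
by move=> t; rewrite rootM negb_or => /andP[/HP ? /HQ ?].
Qed.

Lemma generic_all_seq (I : eqType) (L : seq I) (P : I -> k -> Prop) :
  (forall i, i \in L -> generic (P i)) -> generic (fun t => forall i, i \in L -> P i t).
Proof.
elim: L => [|i L IH] PL; first by exists 1; rewrite ?oner_neq0.
have PL' j : j \in L -> generic (P j) by move=> jL; apply/PL/mem_behead.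
have [D D0 HD] := generic_and (PL i (mem_head i L)) (IH PL').
exists D => // t /HD[Pi PLt] j.
by rewrite inE => /predU1P[-> | /PLt].
Qed.

Lemma mxrank_unit_compression m1 n1 (M : 'M[k]_(m1, n1)) :
  exists (P : 'M_(\rank M, m1)) (Q : 'M_(n1, \rank M)), \det (P *m M *m Q) != 0.
Proof.
move: (col_ebase M) (row_ebase M) (col_ebase_unit M) (row_ebase_unit M) (mulmx_ebase M).
set r := \rank M => C R Cu Ru defM.
exists (pid_mx r *m invmx C), (invmx R *m pid_mx r).
rewrite -defM !mulmxA mulmxKV // mulmxK // !pid_mx_id ?rank_leq_row ?rank_leq_col //.
by rewrite pid_mx_1 det1 oner_neq0.
Qed.

(* A nonzero maximal minor of [A + t1 B] stays nonzero off the roots of its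
   determinant, a polynomial in [t]. *)
Lemma mxrank_pencil_generic m1 n1 (A B : 'M[k]_(m1, n1)) t1 :
  generic (fun t => \rank (A + t1 *: B)%R <= \rank (A + t *: B)%R)%N.
Proof.
have [P [Q minor_t1]] := mxrank_unit_compression (A + t1 *: B).
pose D := \det (map_mx polyC P *m (map_mx polyC A + 'X *: map_mx polyC B) *m map_mx polyC Q).
have DE t : D.[t] = \det (P *m (A + t *: B) *m Q).
  rewrite -horner_evalE /D -det_map_mx !map_mxM.
  congr (\det (_ *m _ *m _)); apply/matrixP => i j; rewrite !mxE /= ?horner_evalE.
  - by rewrite hornerC.
  - by rewrite hornerD hornerM hornerX !hornerC.
  - by rewrite hornerC.
exists D; first by apply: contraNneq minor_t1 => D0; rewrite -DE D0 horner0.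
move=> t; rewrite /root DE => minor_t.
rewrite -(mxrank_unit (_ : P *m (A + t *: B) *m Q \in unitmx)) ?unitmxE ?unitfE //.
exact: leq_trans (mxrankM_maxl _ _) (mxrankM_maxr _ _).
Qed.

Lemma mxrank_adds_pencil_generic n m1 m2 (U : 'M[k]_(m1, n)) (W : 'M_(m2, n)) N t1 :
  generic (fun t =>
    \rank (U + W *m (1%:M + t1 *: N)) <= \rank (U + W *m (1%:M + t *: N)))%N.
Proof.
have colE t :
    \rank (U + W *m (1%:M + t *: N)) = \rank (col_mx U W + t *: col_mx 0 (W *m N))%R.
  by rewrite (addsmxE _ _).1 mulmxDr mulmx1 -scalemxAr scale_col_mx scaler0 add_col_mx addr0.
have [D D0 HD] := mxrank_pencil_generic (col_mx U W) (col_mx 0 (W *m N)) t1.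
by exists D => // t /HD; rewrite !colE.
Qed.

End Generic.

Lemma generic_witness (k : closedFieldType) (P : k -> Prop) : generic P -> exists t, P t.
Proof. by case=> D /closed_nonrootP[t /[swap] HP /HP]; exists t. Qed.

(* As [x] lies in [U] and [W], [U + W (1 + p^T q)] contains
   [x (1 + p^T q) - x = (x p^T) q], hence [q], hence [W], hence [U + W + q]. *)
Lemma mxrank_adds_transvection (k : fieldType) n m1 m2 (U : 'M[k]_(m1, n))
    (W : 'M_(m2, n)) (x p q : 'rV_n) :
  (x <= U :&: W)%MS -> x *m p^T != 0 -> ~~ (q <= U + W)%MS ->
  (\rank (U + W) < \rank (U + W *m (1%:M + p^T *m q)))%N.
Proof.
move=> xUW xp0 qUW; set W1 := W *m (1%:M + p^T *m q).
have xU : (x <= U)%MS := submx_trans xUW (capmxSl _ _).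
have xW : (x <= W)%MS := submx_trans xUW (capmxSr _ _).
have qUW1 : (q <= U + W1)%MS.
  have xpq : ((x *m p^T) *m q <= U + W1)%MS.
    have -> : (x *m p^T) *m q = x *m (1%:M + p^T *m q) - x.
      by rewrite mulmxDr mulmx1 addrC addKr mulmxA.
    rewrite addmx_sub ?eqmx_opp ?(submx_trans xU) ?addsmxSl //.
    by rewrite (submx_trans _ (addsmxSr U W1)) ?submxMr.
  move: xpq; rewrite [x *m p^T]mx11_scalar mul_scalar_mx.
  move=> /(scalemx_sub ((x *m p^T) 0 0)^-1).
  rewrite scalerA mulVf ?scale1r //.
  by apply: contra xp0 => /eqP xp00; rewrite [x *m p^T]mx11_scalar xp00 raddf0.
have WUW1 : (W <= U + W1)%MS.
  have -> : W = W1 - (W *m p^T) *m q by rewrite /W1 mulmxDr mulmx1 mulmxA addrK.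
  by rewrite addmx_sub ?eqmx_opp ?addsmxSr ?(submx_trans (submxMl _ _) qUW1).
apply: leq_trans (_ : \rank (U + W + q)%MS <= _)%N.
  rewrite rank_ltmx // ltmxE addsmxSl /=.
  by apply: contra qUW => /(submx_trans (addsmxSr _ _)).
by rewrite mxrankS // !addsmx_sub qUW1 WUW1 addsmxSl.
Qed.

Section GeneralPosition.
Context {k : closedFieldType} {n : nat} (G : 'M[k]_n -> Prop).
Hypotheses (G1 : G 1%:M) (GM : forall a b, G a -> G b -> G (a *m b))
  (Grich : transvection_rich G).

(* With truncated subtraction: if [\rank U + \rank W <= n] this says [U :&: W = 0]. *)
Definition transversal (U W : 'M[k]_n) :=
  (\rank (U :&: W) <= \rank U + \rank W - n)%N.

Lemma transversalN (U W : 'M[k]_n) :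
  ~~ transversal U W -> (\rank (U + W) < n)%N /\ (U :&: W)%MS != 0.
Proof.
rewrite /transversal -ltnNge -mxrank_eq0 => ltUW; have := mxrank_sum_cap U W.
by split; lia.
Qed.

Definition adds_corank (L : seq ('M[k]_n * 'M[k]_n)) g :=
  (\sum_(UW <- L) (n - \rank (UW.1 + UW.2 *m g^T)))%N.

Lemma adds_corank_decrease L g : G g ->
    ~~ all (fun UW => transversal UW.1 (UW.2 *m g^T)) L ->
  exists2 g', G g' & (adds_corank L g' < adds_corank L g)%N.
Proof.
move=> Gg /allPn[[U W] UWL /= notUW].
set W0 := W *m g^T in notUW.
have [rS /rowV0Pn[x xUW x0]] := transversalN notUW.
have xS : (x <= U + W0)%MS.
  exact: submx_trans xUW (submx_trans (capmxSl _ _) (addsmxSl _ _)).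
have [p [q [xp qS Gt]]] := Grich x0 xS rS.
pose R (UW : 'M_n * 'M_n) t := \rank (UW.1 + UW.2 *m g^T *m (1%:M + t *: (p^T *m q))).
have R0 UW : R UW 0 = \rank (UW.1 + UW.2 *m g^T) by rewrite /R scale0r addr0 mulmx1.
have [t Rt] : exists t, forall UW, UW \in L -> (R UW 0%R <= R UW t)%N /\ (R UW 1%R <= R UW t)%N.
  apply/generic_witness/generic_all_seq => UW _.
  by apply: generic_and; apply: mxrank_adds_pencil_generic.
exists ((1%:M + t *: (q^T *m p)) *m g); first exact: GM.
have -> : adds_corank L ((1%:M + t *: (q^T *m p)) *m g) = (\sum_(UW <- L) (n - R UW t))%N.
  apply: eq_bigr => UW _; rewrite /R trmx_mul raddfD /= trmx1 linearZ /=.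
  by rewrite trmx_mul trmxK mulmxA.
rewrite /adds_corank (big_rem _ UWL) [X in (_ < X)%N](big_rem _ UWL) /=.
rewrite -addSn; apply: leq_add.
  have := proj2 (Rt _ UWL); rewrite /R /= scale1r -/W0.
  by move=> /(leq_trans (mxrank_adds_transvection xUW xp qS)); lia.
rewrite big_seq_cond [X in (_ <= X)%N]big_seq_cond; apply: leq_sum => UW /andP[/mem_rem UWL' _].
by rewrite -R0 leq_sub2l // (proj1 (Rt _ UWL')).
Qed.

Lemma exists_general_position L :
  exists2 g, G g & all (fun UW => transversal UW.1 (UW.2 *m g^T)) L.
Proof.
have [m ltm] := ubnP (adds_corank L 1%:M).
elim: m (1%:M : 'M_n) G1 ltm => // m IH g Gg ltgm.
have [|notall] := boolP (all (fun UW => transversal UW.1 (UW.2 *m g^T)) L); first by exists g.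
have [g' Gg' ltg'] := adds_corank_decrease Gg notall.
exact: IH g' Gg' (leq_trans ltg' ltgm).
Qed.

End GeneralPosition.

Section Eigenspaces.
Context {k : fieldType} {n : nat}.
Implicit Types (x y g A X : 'M[k]_n).

Lemma mxrank_eigenspace_tr x l : \rank (eigenspace x^T l) = eigdim x l.
Proof.
by rewrite mxrank_ker /eigdim -(mxrank_tr (x - _)) linearB /= tr_scalar_mx.
Qed.

Lemma eigenspace_conj A X l : A \in unitmx ->
  (eigenspace (invmx A *m X *m A) l :=: eigenspace X l *m A)%MS.
Proof.
move=> Au; apply/eqmxP/andP; split.
  rewrite -[eigenspace (invmx A *m X *m A) l](mulmxKV Au) submxMr //.
  apply/eigenspaceP; have /eigenspaceP := submx_refl (eigenspace (invmx A *m X *m A) l).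
  by move/(congr1 (mulmx^~ (invmx A))); rewrite -scalemxAl !mulmxA mulmxK.
apply/eigenspaceP; rewrite !mulmxA mulmxK //.
by have /eigenspaceP -> := submx_refl (eigenspace X l); rewrite scalemxAl.
Qed.

Lemma eigenspace_conj_tr g x l : g \in unitmx ->
  (eigenspace (g *m x *m invmx g)^T l :=: eigenspace x^T l *m g^T)%MS.
Proof.
by move=> gu; rewrite !trmx_mul trmx_inv mulmxA; apply: eigenspace_conj; rewrite unitmx_tr.
Qed.

Lemma eigdim_conj g x l : g \in unitmx -> eigdim (g *m x *m invmx g) l = eigdim x l.
Proof.
move=> gu; rewrite -!mxrank_eigenspace_tr (eigenspace_conj_tr _ _ gu).
by rewrite mxrankMfree // row_free_unit unitmx_tr.
Qed.

(* Subspaces are row spaces, so a line [v] fixed by [y] is seen as the row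
   [v^T] of an eigenspace of [y^T], on which conjugation by [g] acts by [g^T]. *)
Lemma fixes_line_eigenspace y v :
  fixes_line y v <-> exists l, (v^T <= eigenspace y^T l)%MS.
Proof.
split=> -[l yv]; exists l; first by apply/eigenspaceP; rewrite -trmx_mul yv linearZ.
by apply: trmx_inj; move/eigenspaceP: yv; rewrite trmx_mul linearZ.
Qed.

Lemma mxrank_bigcap_codim e (E : 'I_e -> 'M[k]_n) :
  (n - \rank (\bigcap_(j < e) E j)%MS <= \sum_(j < e) (n - \rank (E j)))%N.
Proof.
elim: e E => [|e IH] E; first by rewrite !big_ord0 mxrank1 subnn.
rewrite !big_ord_recr /=; set A := (\bigcap_(j < e) _)%MS.
have := IH (fun j => E (widen_ord (leqnSn e) j)); rewrite -/A.
have := mxrank_sum_cap A (E ord_max); have := rank_leq_col (A + E ord_max)%MS.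
set S := (\sum_(j < e) _)%N; lia.
Qed.

Lemma common_fixed_line e (y : 'I_e -> 'M[k]_n) (lam : 'I_e -> k) :
    (\sum_(j < e) (n - eigdim (y j) (lam j)) < n)%N ->
  exists v : 'cV_n, v != 0 /\ forall j, fixes_line (y j) v.
Proof.
move=> small_codim; pose E j := eigenspace (y j)^T (lam j).
have : (\bigcap_(j < e) E j)%MS != 0.
  have codimE : (\sum_(j < e) (n - \rank (E j)) = \sum_(j < e) (n - eigdim (y j) (lam j)))%N.
    by apply: eq_bigr => j _; rewrite mxrank_eigenspace_tr.
  by rewrite -mxrank_eq0; have := mxrank_bigcap_codim E; rewrite codimE; lia.
case/rowV0Pn => w /sub_bigcapmxP wE w0; exists w^T; split; first by rewrite trmx_eq0.
by move=> j; apply/fixes_line_eigenspace; exists (lam j); rewrite trmxK wE.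
Qed.

End Eigenspaces.

Lemma exists_spectrum (k : closedFieldType) n (X : 'M[k]_n) :
  exists s : seq k, forall l, eigenvalue X l -> l \in s.
Proof.
have [s charX] := closed_field_poly_normal (char_poly X); exists s => l.
by rewrite eigenvalue_root_char charX (monicP (char_poly_monic X)) scale1r root_prod_XsubC.
Qed.

Section CommonEigenvectors.
Context {k : closedFieldType} {n : nat} (G : 'M[k]_n -> Prop).
Hypotheses (G1 : G 1%:M) (GM : forall a b, G a -> G b -> G (a *m b))
  (Gunit : forall a, G a -> a \in unitmx) (Grich : transvection_rich G).

(* The eigenvectors of [(g x g^-1)^T] lie in the spaces [E g^T], [E] an
   eigenspace of [x^T]; for [g] in general position, each [U :&: E g^T] has
   codimension at least that of [U] plus [n - gam]. *)
Lemma eigenvector_cover_step (Fam : seq 'M[k]_n) r x gam :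
    (forall l, eigdim x l <= gam)%N -> (forall U, U \in Fam -> \rank U <= r)%N ->
  exists2 g, G g & exists2 Fam' : seq 'M_n,
    (forall U, U \in Fam' -> \rank U <= r - (n - gam))%N &
    forall U (w : 'rV_n) l, U \in Fam -> w != 0 -> (w <= U)%MS ->
      (w <= eigenspace (g *m x *m invmx g)^T l)%MS -> has (fun U' => w <= U')%MS Fam'.
Proof.
move=> eig_gam rFam; have [s sP] := exists_spectrum x^T.
pose L := [seq (U, eigenspace x^T l) | U <- Fam, l <- s].
have [g Gg gen] := exists_general_position G1 GM Grich L.
exists g => //; exists [seq (UW.1 :&: UW.2 *m g^T)%MS | UW <- L].
  move=> _ /mapP[_ /allpairsP[[U l] [UFam ls ->]] ->] /=.
  have := allP gen _ (allpairs_f _ UFam ls).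
  rewrite /transversal /= mxrankMfree ?row_free_unit ?unitmx_tr ?Gunit // mxrank_eigenspace_tr.
  have := rFam U UFam; have := eig_gam l; have := mxrankS (capmxSl U (eigenspace x^T l *m g^T)).
  set c := \rank (U :&: _); set rU := \rank U; lia.
move=> U w l UFam w0 wU; rewrite eigenspace_conj_tr ?Gunit // => wE.
have /sP ls : eigenvalue x^T l.
  apply: contra w0 => /eqP E0; rewrite -submx0 (submx_trans wE) //.
  by rewrite /eigenspace in E0 *; rewrite E0 mul0mx.
apply/hasP; exists (U :&: eigenspace x^T l *m g^T)%MS; last by rewrite sub_capmx wU.
by apply/mapP; exists (U, eigenspace x^T l) => //; apply: allpairs_f.
Qed.

Lemma eigenvector_cover e (x : 'I_e -> 'M[k]_n) (gam : 'I_e -> nat) m :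
    (forall j l, eigdim (x j) l <= gam j)%N -> (m <= e)%N ->
  exists2 g : 'I_e -> 'M_n, forall j, G (g j) &
  exists2 Fam : seq 'M_n,
    forall U, U \in Fam -> (\rank U <= n - \sum_(j < e | (j < m)%N) (n - gam j))%N &
    forall w : 'rV_n, w != 0 -> (forall j : 'I_e, (j < m)%N ->
      exists l, (w <= eigenspace (g j *m x j *m invmx (g j))^T l)%MS) ->
    has (fun U => w <= U)%MS Fam.
Proof.
move=> eig_gam; elim: m => [_ | m IH lt_m_e].
  exists (fun=> 1%:M) => //; exists [:: 1%:M] => [U | w _ _]; last by rewrite /= submx1.
  by rewrite inE => /eqP ->; rewrite mxrank1 big_pred0 ?subn0.
have [g Gg [Fam rFam covFam]] := IH (ltnW lt_m_e).
pose j0 := Ordinal lt_m_e.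
have [g0 Gg0 [Fam' rFam' covFam']] := eigenvector_cover_step (eig_gam j0) rFam.
exists (fun j => if j == j0 then g0 else g j) => [j | ]; first by case: eqP.
exists Fam' => [U /rFam' | w w0 eig_w].
  suff -> : (\sum_(j < e | (j < m.+1)%N) (n - gam j) =
             \sum_(j < e | (j < m)%N) (n - gam j) + (n - gam j0))%N by rewrite subnDA.
  rewrite (bigD1 j0) ?ltnSn //= addnC; congr (_ + _)%N.
  by apply: eq_bigl => j; rewrite ltnS leq_eqVlt -val_eqE /=; case: ltngtP.
have /hasP[U UFam wU] : has (fun U => w <= U)%MS Fam.
  apply: covFam => // j ltjm; have := eig_w j (ltnW ltjm).
  by rewrite ifN // -val_eqE /= neq_ltn ltjm.
have [l] := eig_w j0 (ltnSn m); rewrite eqxx; exact: covFam' U w l UFam w0 wU.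
Qed.

Lemma exists_conj_without_common_line e (x : 'I_e -> 'M[k]_n) (gam : 'I_e -> nat) :
    (forall j l, eigdim (x j) l <= gam j)%N -> (n <= \sum_(j < e) (n - gam j))%N ->
  exists2 g : 'I_e -> 'M_n, forall j, G (g j) &
    ~ exists v : 'cV_n, v != 0 /\ forall j, fixes_line (g j *m x j *m invmx (g j)) v.
Proof.
move=> eig_gam codim_ge.
have [g Gg [Fam rFam covFam]] := eigenvector_cover eig_gam (leqnn e).
exists g => // -[v [v0 fixed]].
have /hasP[U /rFam rU vU] : has (fun U => v^T <= U)%MS Fam.
  by apply: covFam; rewrite ?trmx_eq0 // => j _; apply/fixes_line_eigenspace.
have /eqP codim_e : (n - \sum_(j < e | (j < e)%N) (n - gam j) == 0)%N.
  by rewrite subn_eq0 (eq_bigl xpredT) // => j; rewrite ltn_ord.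
move: rU; rewrite codim_e leqn0 mxrank_eq0 => /eqP U0.
by move: vU; rewrite U0 submx0 trmx_eq0 (negbTE v0).
Qed.

End CommonEigenvectors.

Lemma sum_leq_mul_predE e n (gam : 'I_e -> nat) : (0 < e)%N -> (forall j, gam j <= n)%N ->
  (\sum_(j < e) gam j <= n * (e - 1))%N = (n <= \sum_(j < e) (n - gam j))%N.
Proof.
move=> e_gt0 gam_le; rewrite sumnB // sum_nat_const card_ord.
have : (\sum_(j < e) gam j <= \sum_(j < e) n)%N by apply: leq_sum.
rewrite sum_nat_const card_ord; set S := (\sum_(j < e) gam j)%N => S_le.
apply/idP/idP; nia.
Qed.

Theorem lemma2p4 (k : closedFieldType) (n : nat) (G : 'M[k]_n -> Prop)
  (HG : SL_or_Sp G) (e : nat) (He : (1 <= e)%N)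
  (x : 'I_e -> 'M[k]_n) (HxG : forall j, G (x j))
  (gam : 'I_e -> nat) (Hgam : forall j, largest_eigdim (x j) (gam j)) :
  ((\sum_(j < e) gam j)%N <= n * (e - 1))%N <->
  exists y : 'I_e -> 'M[k]_n,
    (forall j, conj_in G (x j) (y j)) /\
    ~ (exists v : 'cV[k]_n, v != 0 /\ forall j, fixes_line (y j) v).
Proof.
have gam_le j : (gam j <= n)%N by have [[l <-] _] := Hgam j; apply: leq_subr.
rewrite sum_leq_mul_predE //; split => [codim_ge | [y [conj_y no_line]]].
  have [g Gg no_line] := exists_conj_without_common_line (SL_or_Sp1 HG) (SL_or_SpM HG)
    (SL_or_Sp_unitmx HG) (SL_or_Sp_transvection_rich HG) (fun j => (Hgam j).2) codim_ge.
  by exists (fun j => g j *m x j *m invmx (g j)); split => // j; exists (g j).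
rewrite leqNgt; apply/negP => small_codim; apply: no_line.
have /fin_all_exists[lam lamP] j : exists l, eigdim (x j) l = gam j by case: (Hgam j).
apply: (common_fixed_line (lam := lam)); rewrite (eq_bigr (fun j => n - gam j)%N) // => j _.
have [g [Gg ->]] := conj_y j; by rewrite eigdim_conj ?lamP ?(SL_or_Sp_unitmx HG).
Qed.
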